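(* For every open localic groupoid $G$ we have $\mathcal G(\mathcal O(G))\cong G$, and for every groupoid quantale $Q$ we have $\mathcal O(\mathcal G(Q))\cong Q$.
   Context: Groupoid quantales: for a locale $A$, an $A$-$A$-bimodule is a sup-lattice $M$ with actions $a\triangleright m$, $m\triangleleft a$ preserving joins in each variable, with $1_A\triangleright m=m$, $(a\wedge b)\triangleright m=a\triangleright(b\triangleright m)$, $m\triangleleft1_A=m$, $m\triangleleft(a\wedge b)=(m\triangleleft a)\triangleleft b$, $(a\triangleright m)\triangleleft b=a\triangleright(m\triangleleft b)$. An $A$-$A$-quantale is such a $Q$ with associative join-preserving multiplication and $(a\triangleright x)y=a\triangleright(xy)$, $(x\triangleleft a)y=x(a\triangleright y)$, $(xy)\triangleleft a=x(y\triangleleft a)$; involutive if there is a join-preserving $x\mapsto x^*$ with $x^{**}=x$, $(xy)^*=y^*x^*$, $(a\triangleright(x\triangleleft b))^*=b\triangleright(x^*\triangleleft a)$. A support is a join-preserving $\varsigma:Q\to A$ with $\varsigma(1_Q)=1_A$, $\varsigma(x)\triangleright y\le xx^*y$, $\varsigma(x)\triangleright x=x$; equivariant if $\varsigma(a\triangleright x)=a\wedge\varsigma(x)$. A based quantal frame is an involutive $A$-$A$-quantale that is a frame with $(a\triangleright x)\wedge y=a\triangleright(x\wedge y)$, $(x\triangleleft a)\wedge y=(x\wedge y)\triangleleft a$; reflexive: a frame homomorphism $\upsilon:Q\to A$ with $\upsilon(a\triangleright1_Q)=a=\upsilon(1_Q\triangleleft a)$. $Q\otimes_AQ$ is $Q\otimes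 Q$ modulo $x\otimes(a\triangleright y)=(x\triangleleft a)\otimes y$; multiplicative: the right adjoint of the induced $\mu_A:Q\otimes_AQ\to Q$ preserves joins. Unit laws: $\bigvee_{xy\le a}\upsilon(x)\triangleright y=a$; inverse law: $\upsilon(a)\triangleright1_Q=\bigvee_{xy^*\le a}x\wedge y$. A groupoid quantale is a multiplicative equivariantly supported reflexive based quantal frame satisfying both laws. $\mathcal G(Q)$ is the open localic groupoid with $\mathcal O(G_0)=A$, $\mathcal O(G_1)=Q$, $d^*(a)=a\triangleright1_Q$, $i^*(x)=x^*$, $r=d\circ i$, $u^*=\upsilon$, $\mathcal O(G_2)=Q\otimes_AQ$, $m^*(a)=\bigvee_{xy\le a}x\otimes y$. For an open localic groupoid $G$ (domain map $d$ open), $\mathcal O(G)$ is $\mathcal O(G_1)$ with multiplication $\mathcal O(G_1)\otimes\mathcal O(G_1)\to\mathcal O(G_2)\xrightarrow{m_!}\mathcal O(G_1)$, involution $i_!$, actions of $\mathcal O(G_0)$ given by $a\triangleright q=d^*(a)\wedge q$ and $q\triangleleft a=r^*(a)\wedge q$, support $d_!$, and $\upsilon=u^*$; it is a groupoid quantale. *)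

(* Frames, locales (as frames, with maps
   given by their inverse-image frame homomorphisms), open localic groupoids,
   groupoid quantales, and the constructions O(-) and G(-). *)

Record Frame := {
  fcar :> Type;
  fle : fcar -> fcar -> Prop;
  fsup : (fcar -> Prop) -> fcar;
  fmeet : fcar -> fcar -> fcar;
  fle_refl : forall x, fle x x;
  fle_trans : forall x y z, fle x y -> fle y z -> fle x z;
  fle_antisym : forall x y, fle x y -> fle y x -> x = y;
  fsup_ub : forall (P : fcar -> Prop) x, P x -> fle x (fsup P);
  fsup_lub : forall (P : fcar -> Prop) y, (forall x, P x -> fle x y) -> fle (fsup P) y;
  fmeet_glb : forall x y z, fle z (fmeet x y) <-> (fle z x /\ fle z y);
  fdistr : forall x (P : fcar -> Prop),
      fmeet x (fsup P) = fsup (fun z => exists y, P y /\ z = fmeet x y)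
}.
Arguments fle {f} _ _.
Arguments fsup {f} _.
Arguments fmeet {f} _ _.

Definition img {X Y : Type} (f : X -> Y) (P : X -> Prop) : Y -> Prop :=
  fun y => exists x, P x /\ y = f x.

Definition ftop (F : Frame) : F := @fsup F (fun _ => True).
Definition finf (F : Frame) (P : F -> Prop) : F :=
  @fsup F (fun z => forall x, P x -> fle z x).

Definition sup_preserving {A B : Frame} (f : A -> B) : Prop :=
  forall P : A -> Prop, f (fsup P) = fsup (img f P).

Definition frame_hom {A B : Frame} (f : A -> B) : Prop :=
  sup_preserving f /\ (forall x y, f (fmeet x y) = fmeet (f x) (f y))
  /\ f (ftop A) = ftop B.

Definition frame_iso {A B : Frame} (f : A -> B) : Prop :=
  frame_hom f /\ exists g : B -> A, (forall x, g (f x) = x) /\ (forall y, f (g y) = y).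

(* ---------- Tensor products over a base locale ----------
   Q (x)_A Q is realised (Joyal--Tierney) as the sup-lattice of subsets S of
   Q x Q that are down-closed, closed under joins in each variable separately,
   and saturated for the relation  (x <| a) (x) y = x (x) (a |> y);
   ordered by inclusion.  Joins are closures of unions, meets are intersections,
   and x (x) y corresponds to the closure of the down-set of (x,y). *)
Definition tsat {Q A : Frame} (ra : Q -> A -> Q) (la : A -> Q -> Q)
    (S : Q -> Q -> Prop) : Prop :=
  (forall x y x' y', S x y -> fle x' x -> fle y' y -> S x' y') /\
  (forall (P : Q -> Prop) y, (forall x, P x -> S x y) -> S (fsup P) y) /\
  (forall x (P : Q -> Prop), (forall y, P y -> S x y) -> S x (fsup P)) /\
  (forall x a y, S (ra x a) y <-> S x (la a y)).

Definition tcl {Q A : Frame} (ra : Q -> A -> Q) (la : A -> Q -> Q)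
    (R : Q -> Q -> Prop) : Q -> Q -> Prop :=
  fun x y => forall S, tsat ra la S -> (forall u v, R u v -> S u v) -> S x y.

Definition teq {Q : Type} (S T : Q -> Q -> Prop) : Prop :=
  forall x y, S x y <-> T x y.

Definition tsat3 {Q A : Frame} (ra : Q -> A -> Q) (la : A -> Q -> Q)
    (S : Q -> Q -> Q -> Prop) : Prop :=
  (forall x y z x' y' z', S x y z -> fle x' x -> fle y' y -> fle z' z -> S x' y' z') /\
  (forall (P : Q -> Prop) y z, (forall x, P x -> S x y z) -> S (fsup P) y z) /\
  (forall x (P : Q -> Prop) z, (forall y, P y -> S x y z) -> S x (fsup P) z) /\
  (forall x y (P : Q -> Prop), (forall z, P z -> S x y z) -> S x y (fsup P)) /\
  (forall x a y z, S (ra x a) y z <-> S x (la a y) z) /\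
  (forall x y a z, S x (ra y a) z <-> S x y (la a z)).

Definition tcl3 {Q A : Frame} (ra : Q -> A -> Q) (la : A -> Q -> Q)
    (R : Q -> Q -> Q -> Prop) : Q -> Q -> Q -> Prop :=
  fun x y z => forall S, tsat3 ra la S -> (forall u v w, R u v w -> S u v w) -> S x y z.

Definition teq3 {Q : Type} (S T : Q -> Q -> Q -> Prop) : Prop :=
  forall x y z, S x y z <-> T x y z.

(* ---------- Localic groupoids ----------
   Data given by inverse-image maps:  d*, r* : O(G0) -> O(G1),
   u* : O(G1) -> O(G0),  i* : O(G1) -> O(G1),
   m* : O(G1) -> O(G2),  O(G2) = O(G1) (x)_{O(G0)} O(G1) (pullback of r and d),
   with actions  q <| a = r*(a) /\ q  and  a |> q = d*(a) /\ q. *)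
Record LGData := {
  lg0 : Frame;
  lg1 : Frame;
  lg_d : fcar lg0 -> fcar lg1;
  lg_r : fcar lg0 -> fcar lg1;
  lg_u : fcar lg1 -> fcar lg0;
  lg_i : fcar lg1 -> fcar lg1;
  lg_m : fcar lg1 -> (fcar lg1 -> fcar lg1 -> Prop)
}.

Definition lg_ract (G : LGData) (x : lg1 G) (a : lg0 G) : lg1 G := fmeet (lg_r G a) x.
Definition lg_lact (G : LGData) (a : lg0 G) (y : lg1 G) : lg1 G := fmeet (lg_d G a) y.

(* inverse image of the pairing <f,g> : G1 -> G2 (f*, g* given), applied to an
   element S of O(G2):  <f,g>*(S) = \/ { f*(x) /\ g*(y) | x (x) y <= S } *)
Definition pair_map (G : LGData) (f g : lg1 G -> lg1 G) (S : lg1 G -> lg1 G -> Prop)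
  : lg1 G := fsup (fun z => exists x y, S x y /\ z = fmeet (f x) (g y)).

Definition open_map {A B : Frame} (f : A -> B) : Prop :=
  exists fl : B -> A, (forall x a, fle (fl x) a <-> fle x (f a)) /\
                      (forall x a, fl (fmeet x (f a)) = fmeet (fl x) a).

Definition localic_groupoid (G : LGData) : Prop :=
  let d := lg_d G in let r := lg_r G in let u := lg_u G in
  let i := lg_i G in let m := lg_m G in
  let ra := lg_ract G in let la := lg_lact G in
  frame_hom d /\ frame_hom r /\ frame_hom u /\ frame_hom i /\
  (* m* : O(G1) -> O(G2) is a frame homomorphism *)
  (forall a, tsat ra la (m a)) /\
  (forall P : lg1 G -> Prop, teq (m (fsup P)) (tcl ra la (fun x y => exists a, P a /\ m a x y))) /\
  (forall a b, teq (m (fmeet a b)) (fun x y => m a x y /\ m b x y)) /\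
  teq (m (ftop _)) (fun _ _ => True) /\
  (* d o u = id, r o u = id *)
  (forall a, u (d a) = a) /\ (forall a, u (r a) = a) /\
  (* d o i = r, r o i = d *)
  (forall a, i (d a) = r a) /\ (forall a, i (r a) = d a) /\
  (* d o m = d o pi1, r o m = r o pi2 *)
  (forall a, teq (m (d a)) (tcl ra la (fun x _ => fle x (d a)))) /\
  (forall a, teq (m (r a)) (tcl ra la (fun _ y => fle y (r a)))) /\
  (* unit laws: m o <u o d, id> = id, m o <id, u o r> = id *)
  (forall a, pair_map G (fun x => d (u x)) (fun y => y) (m a) = a) /\
  (forall a, pair_map G (fun x => x) (fun y => r (u y)) (m a) = a) /\
  (* inverse laws: m o <id, i> = u o d, m o <i, id> = u o r *)
  (forall a, pair_map G (fun x => x) i (m a) = d (u a)) /\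
  (forall a, pair_map G i (fun y => y) (m a) = r (u a)) /\
  (* associativity: m o (m x id) = m o (id x m) : G3 -> G1 *)
  (forall a, teq3
     (tcl3 ra la (fun x y z => exists p q, m a p q /\ m p x y /\ fle z q))
     (tcl3 ra la (fun x y z => exists p q, m a p q /\ fle x p /\ m q y z))).

Definition open_localic_groupoid (G : LGData) : Prop :=
  localic_groupoid G /\ open_map (lg_d G).

Definition lg_iso (G H : LGData) : Prop :=
  exists (f0 : lg0 G -> lg0 H) (f1 : lg1 G -> lg1 H),
    frame_iso f0 /\ frame_iso f1 /\
    (forall a, f1 (lg_d G a) = lg_d H (f0 a)) /\
    (forall a, f1 (lg_r G a) = lg_r H (f0 a)) /\
    (forall x, f0 (lg_u G x) = lg_u H (f1 x)) /\
    (forall x, f1 (lg_i G x) = lg_i H (f1 x)) /\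
    (forall a x y, lg_m G a x y <-> lg_m H (f1 a) (f1 x) (f1 y)).

Record GQData := {
  qA : Frame;
  qQ : Frame;
  q_lact : fcar qA -> fcar qQ -> fcar qQ;
  q_ract : fcar qQ -> fcar qA -> fcar qQ;
  q_mul : fcar qQ -> fcar qQ -> fcar qQ;
  q_inv : fcar qQ -> fcar qQ;
  q_supp : fcar qQ -> fcar qA;
  q_ups : fcar qQ -> fcar qA
}.

Definition is_bimodule (Q : GQData) : Prop :=
  let la := q_lact Q in let ra := q_ract Q in
  (forall (P : qA Q -> Prop) m, la (fsup P) m = fsup (img (fun a => la a m) P)) /\
  (forall a (P : qQ Q -> Prop), la a (fsup P) = fsup (img (la a) P)) /\
  (forall m (P : qA Q -> Prop), ra m (fsup P) = fsup (img (ra m) P)) /\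
  (forall (P : qQ Q -> Prop) a, ra (fsup P) a = fsup (img (fun m => ra m a) P)) /\
  (forall m, la (ftop _) m = m) /\
  (forall a b m, la (fmeet a b) m = la a (la b m)) /\
  (forall m, ra m (ftop _) = m) /\
  (forall a b m, ra m (fmeet a b) = ra (ra m a) b) /\
  (forall a b m, ra (la a m) b = la a (ra m b)).

Definition is_AA_quantale (Q : GQData) : Prop :=
  let la := q_lact Q in let ra := q_ract Q in let mul := q_mul Q in
  is_bimodule Q /\
  (forall x y z, mul (mul x y) z = mul x (mul y z)) /\
  (forall (P : qQ Q -> Prop) y, mul (fsup P) y = fsup (img (fun x => mul x y) P)) /\
  (forall x (P : qQ Q -> Prop), mul x (fsup P) = fsup (img (mul x) P)) /\
  (forall a x y, mul (la a x) y = la a (mul x y)) /\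
  (forall a x y, mul (ra x a) y = mul x (la a y)) /\
  (forall a x y, ra (mul x y) a = mul x (ra y a)).

Definition is_involutive (Q : GQData) : Prop :=
  let inv := q_inv Q in
  is_AA_quantale Q /\ sup_preserving inv /\
  (forall x, inv (inv x) = x) /\
  (forall x y, inv (q_mul Q x y) = q_mul Q (inv y) (inv x)) /\
  (forall a b x, inv (q_lact Q a (q_ract Q x b)) = q_lact Q b (q_ract Q (inv x) a)).

Definition is_support (Q : GQData) : Prop :=
  let s := q_supp Q in
  sup_preserving s /\ s (ftop _) = ftop _ /\
  (forall x y, fle (q_lact Q (s x) y) (q_mul Q (q_mul Q x (q_inv Q x)) y)) /\
  (forall x, q_lact Q (s x) x = x).

Definition is_equivariant_support (Q : GQData) : Prop :=
  is_support Q /\ (forall a x, q_supp Q (q_lact Q a x) = fmeet a (q_supp Q x)).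

Definition based_quantal_frame (Q : GQData) : Prop :=
  is_involutive Q /\
  (forall a x y, fmeet (q_lact Q a x) y = q_lact Q a (fmeet x y)) /\
  (forall a x y, fmeet (q_ract Q x a) y = q_ract Q (fmeet x y) a).

Definition reflexive (Q : GQData) : Prop :=
  frame_hom (q_ups Q) /\
  (forall a, q_ups Q (q_lact Q a (ftop _)) = a) /\
  (forall a, q_ups Q (q_ract Q (ftop _) a) = a).

(* the right adjoint of mu_A : Q (x)_A Q -> Q sends a to {(x,y) | xy <= a};
   it preserves joins (joins in Q (x)_A Q are closures of unions) *)
Definition multiplicative (Q : GQData) : Prop :=
  forall P : qQ Q -> Prop,
    teq (fun x y => fle (q_mul Q x y) (fsup P))
        (tcl (q_ract Q) (q_lact Q) (fun x y => exists a, P a /\ fle (q_mul Q x y) a)).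

Definition unit_laws (Q : GQData) : Prop :=
  forall a : qQ Q,
    fsup (fun z => exists x y, fle (q_mul Q x y) a /\ z = q_lact Q (q_ups Q x) y) = a.

Definition inverse_law (Q : GQData) : Prop :=
  forall a : qQ Q,
    q_lact Q (q_ups Q a) (ftop _) =
    fsup (fun z => exists x y, fle (q_mul Q x (q_inv Q y)) a /\ z = fmeet x y).

Definition groupoid_quantale (Q : GQData) : Prop :=
  multiplicative Q /\ is_equivariant_support Q /\ reflexive Q /\
  based_quantal_frame Q /\ unit_laws Q /\ inverse_law Q.

Definition gq_iso (Q R : GQData) : Prop :=
  exists (f0 : qA Q -> qA R) (f1 : qQ Q -> qQ R),
    frame_iso f0 /\ frame_iso f1 /\
    (forall a x, f1 (q_lact Q a x) = q_lact R (f0 a) (f1 x)) /\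
    (forall x a, f1 (q_ract Q x a) = q_ract R (f1 x) (f0 a)) /\
    (forall x y, f1 (q_mul Q x y) = q_mul R (f1 x) (f1 y)) /\
    (forall x, f1 (q_inv Q x) = q_inv R (f1 x)) /\
    (forall x, f0 (q_supp Q x) = q_supp R (f1 x)) /\
    (forall x, f0 (q_ups Q x) = q_ups R (f1 x)).

(* O(G): multiplication m_!, involution i_!, support d_! (left adjoints,
   written as the infima that compute them), actions via d*, r*, upsilon = u* *)
Definition OG (G : LGData) : GQData := {|
  qA := lg0 G;
  qQ := lg1 G;
  q_lact := fun a q => fmeet (lg_d G a) q;
  q_ract := fun q a => fmeet (lg_r G a) q;
  q_mul := fun x y => finf (lg1 G) (fun z => lg_m G z x y);
  q_inv := fun x => finf (lg1 G) (fun z => fle x (lg_i G z));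
  q_supp := fun x => finf (lg0 G) (fun a => fle x (lg_d G a));
  q_ups := lg_u G
|}.

(* G(Q): d*(a) = a |> 1, i* = ( )^*, r = d o i, u* = upsilon,
   m*(a) = \/_{xy <= a} x (x) y = {(x,y) | xy <= a} *)
Definition GG (Q : GQData) : LGData := {|
  lg0 := qA Q;
  lg1 := qQ Q;
  lg_d := fun a => q_lact Q a (ftop _);
  lg_r := fun a => q_inv Q (q_lact Q a (ftop _));
  lg_u := q_ups Q;
  lg_i := q_inv Q;
  lg_m := fun a x y => fle (q_mul Q x y) a
|}.

(* The only non-formal point is that, for an open localic groupoid G, the frame
   homomorphism m^* : O(G1) -> O(G2) has a left adjoint m_!, so that the
   multiplication of O(G) determines m^* again; everything else in both round
   trips is the identity on the underlying frames, recovered from i o i = id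
   (itself a consequence of the unit, inverse and associativity laws) and, for
   a groupoid quantale, from the axioms of an equivariantly supported based
   quantal frame.
   Openness of d, through d_! and Frobenius reciprocity, gives normal forms for
   the generators x (x) 1 and 1 (x) y of O(G2).  Transporting the identity
   (g h) h^-1 = g to O(G2) then shows that x (x) y <= m^*(a) exactly when
     \/ { p /\ r(d_!(q /\ i y)) | p (x) q <= m^*(x) } <= a,
   so this join is m_!(x (x) y). *)

From Stdlib Require Import ProofIrrelevance FunctionalExtensionality PropExtensionality.

Section FrameTheory.
Context {F : Frame}.
Implicit Types x y z c : F.

Lemma le_refl x : fle x x. Proof. exact (fle_refl F x). Qed.
Lemma le_trans x y z : fle x y -> fle y z -> fle x z. Proof. exact (fle_trans F x y z). Qed.
Lemma le_antisym x y : fle x y -> fle y x -> x = y. Proof. exact (fle_antisym F x y). Qed.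
Lemma sup_ub (P : F -> Prop) x : P x -> fle x (fsup P). Proof. exact (fsup_ub F P x). Qed.
Lemma sup_lub (P : F -> Prop) y : (forall x, P x -> fle x y) -> fle (fsup P) y.
Proof. exact (fsup_lub F P y). Qed.

Lemma meet_lel x y : fle (fmeet x y) x.
Proof. exact (proj1 (proj1 (fmeet_glb F x y _) (le_refl _))). Qed.
Lemma meet_ler x y : fle (fmeet x y) y.
Proof. exact (proj2 (proj1 (fmeet_glb F x y _) (le_refl _))). Qed.
Lemma le_meetP x y z : fle z (fmeet x y) <-> fle z x /\ fle z y.
Proof. exact (fmeet_glb F x y z). Qed.
Lemma le_meet x y z : fle z x -> fle z y -> fle z (fmeet x y).
Proof. intros; apply le_meetP; auto. Qed.

Lemma meetC x y : fmeet x y = fmeet y x.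
Proof. apply le_antisym; apply le_meet; (apply meet_ler || apply meet_lel). Qed.
Lemma meetA x y z : fmeet (fmeet x y) z = fmeet x (fmeet y z).
Proof.
  apply le_antisym; repeat apply le_meet; eauto using le_trans, meet_lel, meet_ler.
Qed.
Lemma meet_mono x x' y y' : fle x x' -> fle y y' -> fle (fmeet x y) (fmeet x' y').
Proof. intros; apply le_meet; eauto using le_trans, meet_lel, meet_ler. Qed.
Lemma meet_idl x y : fle x y -> fmeet x y = x.
Proof. intros; apply le_antisym; [apply meet_lel | apply le_meet; auto using le_refl]. Qed.
Lemma meet_idr x y : fle x y -> fmeet y x = x.
Proof. intros; rewrite meetC; apply meet_idl; auto. Qed.

Lemma le_top x : fle x (ftop F). Proof. apply sup_ub; exact I. Qed.
Lemma meet_topl x : fmeet (ftop F) x = x. Proof. apply meet_idr, le_top. Qed.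
Lemma meet_topr x : fmeet x (ftop F) = x. Proof. apply meet_idl, le_top. Qed.

Lemma meet_sup_le x (P : F -> Prop) c :
  (forall z, P z -> fle (fmeet x z) c) -> fle (fmeet x (fsup P)) c.
Proof. intros H; rewrite fdistr; apply sup_lub; intros w [y [Py ->]]; auto. Qed.
Lemma sup_meet_le x (P : F -> Prop) c :
  (forall z, P z -> fle (fmeet z x) c) -> fle (fmeet (fsup P) x) c.
Proof. intros H; rewrite meetC; apply meet_sup_le; intros; rewrite meetC; auto. Qed.

Lemma finf_lb (P : F -> Prop) z : P z -> fle (finf F P) z.
Proof. intros Pz; apply sup_lub; intros w Hw; apply Hw, Pz. Qed.
Lemma finf_glb (P : F -> Prop) w : (forall z, P z -> fle w z) -> fle w (finf F P).
Proof. intros H; apply sup_ub; exact H. Qed.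
Lemma finf_min (P : F -> Prop) a : P a -> (forall z, P z -> fle a z) -> finf F P = a.
Proof. intros; apply le_antisym; [apply finf_lb | apply finf_glb]; auto. Qed.

End FrameTheory.

Section FrameHoms.
Context {A B : Frame}.
Implicit Types f : A -> B.

Lemma sup_preserving_mono f : sup_preserving f -> forall x y, fle x y -> fle (f x) (f y).
Proof.
  intros Hf x y Hxy.
  assert (E : y = fsup (fun z => z = x \/ z = y)).
  { apply le_antisym; [apply sup_ub; right; reflexivity|].
    apply sup_lub; intros z [-> | ->]; auto using le_refl. }
  rewrite E, Hf. apply sup_ub. exists x; split; auto.
Qed.

Lemma frame_hom_sup f : frame_hom f -> sup_preserving f.
Proof. intros [H _]; exact H. Qed.
Lemma frame_hom_meet f : frame_hom f -> forall x y, f (fmeet x y) = fmeet (f x) (f y).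
Proof. intros [_ [H _]]; exact H. Qed.
Lemma frame_hom_top f : frame_hom f -> f (ftop A) = ftop B.
Proof. intros [_ [_ H]]; exact H. Qed.
Lemma frame_hom_mono f : frame_hom f -> forall x y, fle x y -> fle (f x) (f y).
Proof. intros Hf; apply sup_preserving_mono, frame_hom_sup, Hf. Qed.

End FrameHoms.

Lemma frame_hom_comp {A B C : Frame} (f : A -> B) (g : B -> C) :
  frame_hom f -> frame_hom g -> frame_hom (fun x => g (f x)).
Proof.
  intros Hf Hg; split; [|split].
  - intros P. rewrite (frame_hom_sup f Hf), (frame_hom_sup g Hg). apply le_antisym.
    + apply sup_lub. intros z [w [[x [Px ->]] ->]]. apply sup_ub. exists x; auto.
    + apply sup_lub. intros z [x [Px ->]]. apply sup_ub. exists (f x); split; auto.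
      exists x; auto.
  - intros; rewrite (frame_hom_meet f Hf), (frame_hom_meet g Hg); reflexivity.
  - rewrite (frame_hom_top f Hf), (frame_hom_top g Hg); reflexivity.
Qed.

Lemma frame_hom_id {F : Frame} : frame_hom (fun x : F => x).
Proof.
  split; [|split]; auto. intros P. apply le_antisym.
  - apply sup_lub; intros x Px; apply sup_ub; exists x; auto.
  - apply sup_lub; intros z [x [Px ->]]; apply sup_ub; auto.
Qed.

Lemma frame_iso_id {F : Frame} : frame_iso (fun x : F => x).
Proof. split; [exact frame_hom_id | exists (fun x => x); auto]. Qed.
(* <f,g>^*(S) for inverse images f, g; [pair_map G] is the case F = O(G1). *)
Definition pairing {Q F : Frame} (f g : Q -> F) (S : Q -> Q -> Prop) : F :=
  fsup (fun z => exists x y, S x y /\ z = fmeet (f x) (g y)).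
Definition pairing3 {Q F : Frame} (f g h : Q -> F) (S : Q -> Q -> Q -> Prop) : F :=
  fsup (fun z => exists x y w, S x y w /\ z = fmeet (fmeet (f x) (g y)) (h w)).

Section Pairing.
Context {Q F : Frame}.
Implicit Types f g h : Q -> F.

Lemma pairing_ub f g (S : Q -> Q -> Prop) x y :
  S x y -> fle (fmeet (f x) (g y)) (pairing f g S).
Proof. intros; apply sup_ub; exists x, y; auto. Qed.
Lemma pairing_lub f g (S : Q -> Q -> Prop) c :
  (forall x y, S x y -> fle (fmeet (f x) (g y)) c) -> fle (pairing f g S) c.
Proof. intros H; apply sup_lub; intros z [x [y [Sxy ->]]]; auto. Qed.
Lemma pairing_mono f g (S T : Q -> Q -> Prop) :
  (forall x y, S x y -> T x y) -> fle (pairing f g S) (pairing f g T).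
Proof. intros H; apply pairing_lub; intros; apply pairing_ub; auto. Qed.
Lemma pairing_ext f g f' g' (S : Q -> Q -> Prop) :
  (forall x, f x = f' x) -> (forall y, g y = g' y) -> pairing f g S = pairing f' g' S.
Proof.
  intros Ef Eg; apply le_antisym; apply pairing_lub; intros x y Sxy;
    [rewrite Ef, Eg | rewrite <- Ef, <- Eg]; apply pairing_ub; exact Sxy.
Qed.

Lemma pairing3_ub f g h S x y w :
  S x y w -> fle (fmeet (fmeet (f x) (g y)) (h w)) (pairing3 f g h S).
Proof. intros; apply sup_ub; exists x, y, w; auto. Qed.
Lemma pairing3_lub f g h S c :
  (forall x y w, S x y w -> fle (fmeet (fmeet (f x) (g y)) (h w)) c) ->
  fle (pairing3 f g h S) c.
Proof. intros H; apply sup_lub; intros z [x [y [w [Sxyw ->]]]]; auto. Qed.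
Lemma pairing3_mono f g h (S T : Q -> Q -> Q -> Prop) :
  (forall x y w, S x y w -> T x y w) -> fle (pairing3 f g h S) (pairing3 f g h T).
Proof. intros H; apply pairing3_lub; intros; apply pairing3_ub; auto. Qed.

End Pairing.

Lemma frame_hom_pairing {Q F : Frame} (f g : Q -> Q) (h : Q -> F) S :
  frame_hom h -> h (pairing f g S) = pairing (fun x => h (f x)) (fun y => h (g y)) S.
Proof.
  intros Hh. unfold pairing at 1. rewrite (frame_hom_sup h Hh). apply le_antisym.
  - apply sup_lub; intros z [w [[x [y [Sxy ->]]] ->]].
    rewrite (frame_hom_meet h Hh). apply (pairing_ub (fun x => h (f x)) (fun y => h (g y))), Sxy.
  - apply pairing_lub; intros x y Sxy. rewrite <- (frame_hom_meet h Hh).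
    apply sup_ub. exists (fmeet (f x) (g y)); split; auto. exists x, y; auto.
Qed.

Section GroupoidAxioms.
Variable G : LGData.
Local Notation d := (lg_d G).
Local Notation r := (lg_r G).
Local Notation u := (lg_u G).
Local Notation i := (lg_i G).
Local Notation m := (lg_m G).
Local Notation ra := (lg_ract G).
Local Notation la := (lg_lact G).
Hypothesis HG : localic_groupoid G.

Ltac groupoid_axiom := let H := fresh in
  pose proof HG as H; unfold localic_groupoid in H; cbv zeta in H;
  decompose [and] H; assumption.

Lemma d_hom : frame_hom d. Proof. groupoid_axiom. Qed.
Lemma r_hom : frame_hom r. Proof. groupoid_axiom. Qed.
Lemma i_hom : frame_hom i. Proof. groupoid_axiom. Qed.
Lemma m_tsat a : tsat ra la (m a). Proof. revert a; groupoid_axiom. Qed.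
Lemma m_meet a b : teq (m (fmeet a b)) (fun x y => m a x y /\ m b x y).
Proof. revert a b; groupoid_axiom. Qed.
Lemma i_d a : i (d a) = r a. Proof. revert a; groupoid_axiom. Qed.
Lemma i_r a : i (r a) = d a. Proof. revert a; groupoid_axiom. Qed.
Lemma m_r a : teq (m (r a)) (tcl ra la (fun _ y => fle y (r a))).
Proof. revert a; groupoid_axiom. Qed.
Lemma unit_l a : pair_map G (fun x => d (u x)) (fun y => y) (m a) = a.
Proof. revert a; groupoid_axiom. Qed.
Lemma unit_r a : pair_map G (fun x => x) (fun y => r (u y)) (m a) = a.
Proof. revert a; groupoid_axiom. Qed.
Lemma inv_r a : pair_map G (fun x => x) i (m a) = d (u a).
Proof. revert a; groupoid_axiom. Qed.
Lemma inv_l a : pair_map G i (fun y => y) (m a) = r (u a).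
Proof. revert a; groupoid_axiom. Qed.
Lemma m_assoc a : teq3
  (tcl3 ra la (fun x y z => exists p q, m a p q /\ m p x y /\ fle z q))
  (tcl3 ra la (fun x y z => exists p q, m a p q /\ fle x p /\ m q y z)).
Proof. revert a; groupoid_axiom. Qed.

End GroupoidAxioms.

Ltac meet_ac := apply le_antisym; repeat apply le_meet;
  eauto 8 using le_trans, meet_lel, meet_ler, le_refl.

Section Tensor.
Variable G : LGData.
Local Notation Q := (lg1 G).
Local Notation d := (lg_d G).
Local Notation r := (lg_r G).
Local Notation ra := (lg_ract G).
Local Notation la := (lg_lact G).
Local Notation rel := (Q -> Q -> Prop).

Lemma ract_id x a : fle x (r a) -> ra x a = x.
Proof. apply meet_idr. Qed.
Lemma lact_id a y : fle y (d a) -> la a y = y.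
Proof. apply meet_idr. Qed.

Lemma tsat_down (S : rel) : tsat ra la S ->
  forall x y x' y', S x y -> fle x' x -> fle y' y -> S x' y'.
Proof. intros H; apply H. Qed.
Lemma tsat_supl (S : rel) : tsat ra la S ->
  forall (P : Q -> Prop) y, (forall x, P x -> S x y) -> S (fsup P) y.
Proof. intros H; apply H. Qed.
Lemma tsat_supr (S : rel) : tsat ra la S ->
  forall x (P : Q -> Prop), (forall y, P y -> S x y) -> S x (fsup P).
Proof. intros H; apply H. Qed.
Lemma tsat_balanced (S : rel) : tsat ra la S -> forall x a y, S (ra x a) y <-> S x (la a y).
Proof. intros H; apply H. Qed.

Lemma tcl_incl R x y : R x y -> tcl ra la R x y.
Proof. intros H S _ HR; auto. Qed.

Lemma tcl_tsat R : tsat ra la (tcl ra la R).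
Proof.
  split; [|split; [|split]].
  - intros x y x' y' H H1 H2 S HS HR. exact (tsat_down S HS x y x' y' (H S HS HR) H1 H2).
  - intros P y H S HS HR. apply tsat_supl; auto. intros x Px; apply H; auto.
  - intros x P H S HS HR. apply tsat_supr; auto. intros y Py; apply H; auto.
  - intros x a y; split; intros H S HS HR; apply (tsat_balanced S HS); apply H; auto.
Qed.

Lemma tsat_meet (S T : rel) : tsat ra la S -> tsat ra la T ->
  tsat ra la (fun x y => S x y /\ T x y).
Proof.
  intros HS HT; split; [|split; [|split]].
  - intros x y x' y' [H1 H2] H3 H4; split; eapply tsat_down; eauto.
  - intros P y H; split; apply tsat_supl; auto; intros x Px; apply H; auto.
  - intros x P H; split; apply tsat_supr; auto; intros y Py; apply H; auto.
  - intros x a y; rewrite (tsat_balanced S HS), (tsat_balanced T HT); tauto.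
Qed.

(* The Heyting implication S => U of O(G2); it gives distributivity of O(G2). *)
Lemma tsat_impl (S U : rel) : tsat ra la S -> tsat ra la U ->
  tsat ra la (fun x y => forall x' y', fle x' x -> fle y' y -> S x' y' -> U x' y').
Proof.
  intros HS HU; split; [|split; [|split]].
  - intros x y x' y' H H1 H2 x'' y'' H3 H4 H5. apply H; eauto using le_trans.
  - intros P y H x' y' H1 H2 H3.
    rewrite <- (meet_idl x' (fsup P) H1), fdistr.
    apply tsat_supl; auto. intros w [z [Pz ->]].
    apply (H z Pz); auto using meet_ler. eapply tsat_down; eauto using meet_lel, le_refl.
  - intros x P H x' y' H1 H2 H3.
    rewrite <- (meet_idl y' (fsup P) H2), fdistr.
    apply tsat_supr; auto. intros w [z [Pz ->]].
    apply (H z Pz); auto using meet_ler. eapply tsat_down; eauto using meet_lel, le_refl.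
  - intros x a y; split; intros H x' y'.
    + intros H1 [Hy'a Hy'y]%le_meetP H3.
      rewrite <- (lact_id a y' Hy'a). apply (tsat_balanced U HU).
      apply H; auto.
      * apply meet_mono; auto using le_refl.
      * apply (tsat_balanced S HS). rewrite (lact_id a y' Hy'a); auto.
    + intros [Hx'a Hx'x]%le_meetP H2 H3.
      rewrite <- (ract_id x' a Hx'a). apply (tsat_balanced U HU).
      apply H; auto.
      * apply meet_mono; auto using le_refl.
      * apply (tsat_balanced S HS). rewrite (ract_id x' a Hx'a); auto.
Qed.

Definition O2_carrier := {S : Q -> Q -> Prop | tsat ra la S}.

Definition O2_sup (P : O2_carrier -> Prop) : O2_carrier :=
  exist _ (tcl ra la (fun x y => exists S : O2_carrier, P S /\ proj1_sig S x y)) (tcl_tsat _).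
Definition O2_meet (S T : O2_carrier) : O2_carrier :=
  exist _ (fun x y => proj1_sig S x y /\ proj1_sig T x y)
    (tsat_meet _ _ (proj2_sig S) (proj2_sig T)).

Lemma O2_ext (S T : O2_carrier) :
  (forall x y, proj1_sig S x y <-> proj1_sig T x y) -> S = T.
Proof.
  destruct S as [S HS], T as [T HT]; simpl; intros H.
  assert (S = T) as <-.
  { apply functional_extensionality; intros x; apply functional_extensionality; intros y.
    apply propositional_extensionality; auto. }
  f_equal; apply proof_irrelevance.
Qed.

Lemma O2_distr (S : O2_carrier) (P : O2_carrier -> Prop) :
  O2_meet S (O2_sup P) = O2_sup (fun z => exists T : O2_carrier, P T /\ z = O2_meet S T).
Proof.
  apply O2_ext; intros x y; simpl; split.
  - intros [HSxy Hcl].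
    set (U := tcl ra la (fun x y => exists S0 : O2_carrier,
                (exists T : O2_carrier, P T /\ S0 = O2_meet S T) /\ proj1_sig S0 x y)).
    refine (Hcl (fun x y => forall x' y', fle x' x -> fle y' y -> proj1_sig S x' y' -> U x' y')
              _ _ x y (le_refl _) (le_refl _) HSxy).
    + apply tsat_impl; [apply (proj2_sig S) | apply tcl_tsat].
    + intros x0 y0 [T [PT HT]] x' y' H1 H2 H3. apply tcl_incl.
      exists (O2_meet S T); split; [exists T; auto|]. simpl; split; auto.
      eapply tsat_down; eauto. apply (proj2_sig T).
  - intros H. apply (H (fun x y => proj1_sig S x y /\ proj1_sig (O2_sup P) x y)).
    + apply tsat_meet; [apply (proj2_sig S) | apply tcl_tsat].
    + intros x0 y0 [S0 [[T [PT ->]] [H1 H2]]]; split; auto.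
      apply tcl_incl; exists T; auto.
Qed.

Definition O2 : Frame.
Proof.
  refine {| fcar := O2_carrier;
            fle := fun S T => forall x y, proj1_sig S x y -> proj1_sig T x y;
            fsup := O2_sup; fmeet := O2_meet |}.
  - intros S x y; auto.
  - intros S T U H1 H2 x y H; auto.
  - intros S T H1 H2; apply O2_ext; split; auto.
  - intros P S PS x y H. apply tcl_incl. exists S; auto.
  - intros P T H x y Hxy. apply (Hxy (proj1_sig T) (proj2_sig T)).
    intros x' y' [S [PS HS]]; apply (H S PS); auto.
  - intros S T U; simpl; split.
    + intros H; split; intros; apply H; auto.
    + intros [H1 H2] x y H; split; auto.
  - apply O2_distr.
Defined.

Lemma O2_leP (S T : O2) : fle S T <-> (forall x y, proj1_sig S x y -> proj1_sig T x y).
Proof. reflexivity. Qed.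

(* The locale maps with inverse images f, g satisfy r o f = d o g, so <f,g> lands in G2. *)
Definition composable {F : Frame} (f g : Q -> F) : Prop := forall c, f (r c) = g (d c).

Lemma tcl3_incl R x y z : R x y z -> tcl3 ra la R x y z.
Proof. intros H S _ HR; auto. Qed.

Lemma tsat3_pairing3_le {F : Frame} (f g h : Q -> F) c :
  frame_hom f -> frame_hom g -> frame_hom h -> composable f g -> composable g h ->
  tsat3 ra la (fun x y z => fle (fmeet (fmeet (f x) (g y)) (h z)) c).
Proof.
  intros Hf Hg Hh Hfg Hgh; split; [|split; [|split; [|split; [|split]]]].
  - intros x y z x' y' z' H1 H2 H3 H4. eapply le_trans; [|exact H1].
    repeat apply meet_mono; apply frame_hom_mono; auto.
  - intros P y z H. rewrite (frame_hom_sup f Hf), meetA. apply sup_meet_le.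
    intros w [x [Px ->]]; rewrite <- meetA; auto.
  - intros x P z H. rewrite (frame_hom_sup g Hg), fdistr. apply sup_meet_le.
    intros w [v [[y [Py ->]] ->]]; auto.
  - intros x y P H. rewrite (frame_hom_sup h Hh). apply meet_sup_le.
    intros w [z [Pz ->]]; auto.
  - intros x a y z. unfold lg_ract, lg_lact.
    rewrite (frame_hom_meet f Hf), (frame_hom_meet g Hg), Hfg.
    replace (fmeet (fmeet (fmeet (g (d a)) (f x)) (g y)) (h z))
      with (fmeet (fmeet (f x) (fmeet (g (d a)) (g y))) (h z)) by meet_ac.
    tauto.
  - intros x y a z. unfold lg_ract, lg_lact.
    rewrite (frame_hom_meet g Hg), (frame_hom_meet h Hh), Hgh.
    replace (fmeet (fmeet (f x) (fmeet (h (d a)) (g y))) (h z))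
      with (fmeet (fmeet (f x) (g y)) (fmeet (h (d a)) (h z))) by meet_ac.
    tauto.
Qed.

Lemma pairing3_tcl3 {F : Frame} (f g h : Q -> F) R :
  frame_hom f -> frame_hom g -> frame_hom h -> composable f g -> composable g h ->
  pairing3 f g h (tcl3 ra la R) = pairing3 f g h R.
Proof.
  intros Hf Hg Hh Hfg Hgh. apply le_antisym.
  - apply pairing3_lub. intros x y z H. apply H.
    + apply tsat3_pairing3_le; auto.
    + intros; apply pairing3_ub; auto.
  - apply pairing3_mono, tcl3_incl.
Qed.

End Tensor.

Section GroupoidLaws.
Variable G : LGData.
Local Notation Q := (lg1 G).
Local Notation d := (lg_d G).
Local Notation r := (lg_r G).
Local Notation u := (lg_u G).
Local Notation i := (lg_i G).
Local Notation m := (lg_m G).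
Hypothesis HG : localic_groupoid G.

Lemma pairing_assoc {F : Frame} (f g h : Q -> F) a :
  frame_hom f -> frame_hom g -> frame_hom h -> composable G f g -> composable G g h ->
  pairing (fun p => pairing f g (m p)) h (m a) = pairing f (fun q => pairing g h (m q)) (m a).
Proof.
  intros Hf Hg Hh Hfg Hgh.
  set (R1 := fun x y z => exists p q, m a p q /\ m p x y /\ fle z q).
  set (R2 := fun x y z => exists p q, m a p q /\ fle x p /\ m q y z).
  assert (E1 : pairing (fun p => pairing f g (m p)) h (m a) = pairing3 f g h R1).
  { apply le_antisym.
    - apply pairing_lub; intros p q Hpq. apply sup_meet_le.
      intros z [x [y [Hxy ->]]]. apply pairing3_ub. exists p, q; auto using le_refl.
    - apply pairing3_lub; intros x y z [p [q [Hpq [Hxy Hzq]]]].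
      eapply le_trans; [|apply (pairing_ub _ h (m a) p q Hpq)].
      apply meet_mono; [apply pairing_ub; auto | apply frame_hom_mono; auto]. }
  assert (E2 : pairing f (fun q => pairing g h (m q)) (m a) = pairing3 f g h R2).
  { apply le_antisym.
    - apply pairing_lub; intros p q Hpq. apply meet_sup_le.
      intros z [y [w [Hyw ->]]]. rewrite <- meetA. apply pairing3_ub.
      exists p, q; auto using le_refl.
    - apply pairing3_lub; intros x y z [p [q [Hpq [Hxp Hyz]]]].
      eapply le_trans; [|apply (pairing_ub f _ (m a) p q Hpq)].
      rewrite meetA. apply meet_mono; [apply frame_hom_mono; auto | ].
      apply (pairing_ub g h (m q) y z Hyz). }
  rewrite E1, E2, <- (pairing3_tcl3 G f g h R1), <- (pairing3_tcl3 G f g h R2); auto.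
  apply le_antisym; apply pairing3_mono; intros x y z; apply (m_assoc G HG).
Qed.

Lemma pairing_unit_r {F : Frame} (h : Q -> F) a : frame_hom h ->
  pairing h (fun y => h (r (u y))) (m a) = h a.
Proof.
  intros Hh. rewrite <- (unit_r G HG a) at 2. symmetry; apply frame_hom_pairing, Hh.
Qed.
Lemma pairing_inv_r {F : Frame} (h : Q -> F) a : frame_hom h ->
  pairing h (fun y => h (i y)) (m a) = h (d (u a)).
Proof.
  intros Hh. rewrite <- (inv_r G HG a). symmetry; apply frame_hom_pairing, Hh.
Qed.
Lemma pairing_inv_l {F : Frame} (h : Q -> F) a : frame_hom h ->
  pairing (fun x => h (i x)) h (m a) = h (r (u a)).
Proof.
  intros Hh. rewrite <- (inv_l G HG a). symmetry; apply frame_hom_pairing, Hh.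
Qed.

(* Pointwise, with j = i o i: j g = j g (g^-1 g) = (j g g^-1) g = g. *)
Lemma i_involutive x : i (i x) = x.
Proof.
  set (j := fun x => i (i x)).
  assert (Hj : frame_hom j) by exact (frame_hom_comp i i (i_hom G HG) (i_hom G HG)).
  assert (j_r : forall a, j (r a) = r a).
  { intros a; unfold j; rewrite (i_r G HG), (i_d G HG); reflexivity. }
  change (j x = x). rewrite <- (pairing_unit_r j x Hj).
  rewrite (pairing_ext j (fun y => j (r (u y))) j (fun y => pairing i (fun z => z) (m y)));
    [| reflexivity | intros y; rewrite j_r; symmetry; apply (inv_l G HG)].
  rewrite <- pairing_assoc; auto using frame_hom_id, i_hom;
    [| intros c; rewrite j_r, (i_d G HG); auto | intros c; rewrite (i_r G HG); auto].
  rewrite (pairing_ext _ (fun z => z) (fun p => d (u p)) (fun z => z));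
    [apply (unit_l G HG) | | reflexivity].
  intros p. unfold j. rewrite (pairing_inv_l i p (i_hom G HG)). apply (i_r G HG).
Qed.

Lemma i_le_iff x z : fle x (i z) <-> fle (i x) z.
Proof.
  split; intros H; [rewrite <- (i_involutive z) | rewrite <- (i_involutive x)];
    apply (frame_hom_mono _ (i_hom G HG)), H.
Qed.

End GroupoidLaws.

Section OpenGroupoid.
Variable G : LGData.
Local Notation A := (lg0 G).
Local Notation Q := (lg1 G).
Local Notation d := (lg_d G).
Local Notation r := (lg_r G).
Local Notation u := (lg_u G).
Local Notation i := (lg_i G).
Local Notation m := (lg_m G).
Local Notation ra := (lg_ract G).
Local Notation la := (lg_lact G).
Hypothesis HG : localic_groupoid G.
Variable dl : Q -> A.
Hypothesis dl_adj : forall x a, fle (dl x) a <-> fle x (d a).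
Hypothesis dl_frob : forall x a, dl (fmeet x (d a)) = fmeet (dl x) a.

Let d_mono := frame_hom_mono d (d_hom G HG).
Let r_mono := frame_hom_mono r (r_hom G HG).
Let i_mono := frame_hom_mono i (i_hom G HG).

Lemma le_d_dl x : fle x (d (dl x)). Proof. apply dl_adj, le_refl. Qed.
Lemma dl_mono x y : fle x y -> fle (dl x) (dl y).
Proof. intros; apply dl_adj; eapply le_trans; eauto using le_d_dl. Qed.
Lemma dl_sup_le (P : Q -> Prop) : fle (dl (fsup P)) (fsup (img dl P)).
Proof.
  apply dl_adj, sup_lub. intros x Px. eapply le_trans; [apply le_d_dl|].
  apply d_mono, sup_ub. exists x; auto.
Qed.
Lemma le_r_dl_i p : fle p (r (dl (i p))).
Proof. rewrite <- (i_d G HG). apply (i_le_iff G HG), le_d_dl. Qed.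

Lemma tsat_restrict_l (S : Q -> Q -> Prop) : tsat ra la S ->
  forall p q, S p q <-> S (fmeet (r (dl q)) p) q.
Proof.
  intros HS p q. change (fmeet (r (dl q)) p) with (ra p (dl q)).
  rewrite (tsat_balanced G S HS), (lact_id G); [tauto | apply le_d_dl].
Qed.
Lemma tsat_restrict_r (S : Q -> Q -> Prop) : tsat ra la S ->
  forall p q, S p q <-> S p (fmeet (d (dl (i p))) q).
Proof.
  intros HS p q. change (fmeet (d (dl (i p))) q) with (la (dl (i p)) q).
  rewrite <- (tsat_balanced G S HS), (ract_id G); [tauto | apply le_r_dl_i].
Qed.

(* pi1 x = x (x) 1 and pi2 y = 1 (x) y, the inverse images of the projections G2 -> G1. *)
Definition pi1 (x : Q) : O2 G := exist _ (tcl ra la (fun p _ => fle p x)) (tcl_tsat G _).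
Definition pi2 (y : Q) : O2 G := exist _ (tcl ra la (fun _ q => fle q y)) (tcl_tsat G _).

(* Openness of d makes the saturations of the generators explicit. *)
Lemma pi1P x p q : proj1_sig (pi1 x) p q <-> fle (fmeet (r (dl q)) p) x.
Proof.
  split.
  - intros H. apply (H (fun p q => fle (fmeet (r (dl q)) p) x)).
    + split; [|split; [|split]].
      * intros p0 q0 p' q' H1 H2 H3. eapply le_trans; [|exact H1].
        apply meet_mono; auto. apply r_mono, dl_mono; auto.
      * intros P q0 H1. apply meet_sup_le. auto.
      * intros p0 P H1.
        eapply le_trans; [apply meet_mono; [apply r_mono, dl_sup_le | apply le_refl]|].
        rewrite (frame_hom_sup r (r_hom G HG)). apply sup_meet_le.
        intros z [w [[y [Py ->]] ->]]. auto.
      * intros p0 a q0. unfold lg_ract, lg_lact.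
        rewrite (meetC (d a) q0), dl_frob, (frame_hom_meet r (r_hom G HG)).
        replace (fmeet (r (dl q0)) (fmeet (r a) p0))
          with (fmeet (fmeet (r (dl q0)) (r a)) p0) by meet_ac.
        tauto.
    + intros p0 q0 H0. eapply le_trans; [apply meet_ler | exact H0].
  - intros H. apply tsat_restrict_l; [apply tcl_tsat|]. apply tcl_incl, H.
Qed.

Lemma pi2P y p q : proj1_sig (pi2 y) p q <-> fle (fmeet (d (dl (i p))) q) y.
Proof.
  split.
  - intros H. apply (H (fun p q => fle (fmeet (d (dl (i p))) q) y)).
    + split; [|split; [|split]].
      * intros p0 q0 p' q' H1 H2 H3. eapply le_trans; [|exact H1].
        apply meet_mono; auto. apply d_mono, dl_mono, i_mono; auto.
      * intros P q0 H1. eapply le_trans; [apply meet_mono; [|apply le_refl]|].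
        { apply d_mono. rewrite (frame_hom_sup i (i_hom G HG)). apply dl_sup_le. }
        rewrite (frame_hom_sup d (d_hom G HG)). apply sup_meet_le.
        intros z [w [[v [[x [Px ->]] ->]] ->]]. auto.
      * intros p0 P H1. apply meet_sup_le. auto.
      * intros p0 a q0. unfold lg_ract, lg_lact.
        rewrite (frame_hom_meet i (i_hom G HG)), (i_r G HG), (meetC (d a) (i p0)), dl_frob,
          (frame_hom_meet d (d_hom G HG)).
        replace (fmeet (fmeet (d (dl (i p0))) (d a)) q0)
          with (fmeet (d (dl (i p0))) (fmeet (d a) q0)) by meet_ac.
        tauto.
    + intros p0 q0 H0. eapply le_trans; [apply meet_ler | exact H0].
  - intros H. apply tsat_restrict_r; [apply tcl_tsat|]. apply tcl_incl, H.
Qed.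

Lemma pi_sup (R : Q -> Q -> Q -> Prop) (P : Q -> Prop) (pi : Q -> O2 G) :
  (forall x p q, proj1_sig (pi x) p q <-> tcl ra la (R x) p q) ->
  (forall x x' p q, fle x x' -> R x p q -> R x' p q) ->
  (forall p q, R (fsup P) p q -> proj1_sig (fsup (img pi P)) p q) ->
  pi (fsup P) = fsup (img pi P).
Proof.
  intros Hpi Hmono Hgen. apply le_antisym.
  - apply O2_leP. intros p q H. apply Hpi in H.
    apply (H _ (proj2_sig (fsup (img pi P)))). auto.
  - apply sup_lub. intros S [z [Pz ->]]. apply O2_leP. intros p q H.
    apply Hpi. apply Hpi in H. apply (H _ (tcl_tsat G _)).
    intros p0 q0 H0. apply tcl_incl. eapply Hmono; [|exact H0]. apply sup_ub; auto.
Qed.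

Lemma pi1_hom : frame_hom pi1.
Proof.
  split; [|split].
  - intros P. apply (pi_sup (fun x p q => fle p x)); [reflexivity | |].
    + intros; eapply le_trans; eauto.
    + intros p q H. rewrite <- (meet_idl p (fsup P) H), fdistr.
      apply (tsat_supl G _ (proj2_sig (fsup (img pi1 P)))).
      intros w [z [Pz ->]]. apply tcl_incl. exists (pi1 z); split; [exists z; auto|].
      apply tcl_incl, meet_ler.
  - intros x y. apply le_antisym; apply O2_leP; intros p q H.
    + apply pi1P in H. split; apply pi1P; eapply le_trans; eauto using meet_lel, meet_ler.
    + destruct H as [H1%pi1P H2%pi1P]. apply pi1P, le_meet; auto.
  - apply le_antisym; [apply le_top|]. apply O2_leP; intros p q _. apply tcl_incl, le_top.
Qed.

Lemma pi2_hom : frame_hom pi2.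
Proof.
  split; [|split].
  - intros P. apply (pi_sup (fun y p q => fle q y)); [reflexivity | |].
    + intros; eapply le_trans; eauto.
    + intros p q H. rewrite <- (meet_idl q (fsup P) H), fdistr.
      apply (tsat_supr G _ (proj2_sig (fsup (img pi2 P)))).
      intros w [z [Pz ->]]. apply tcl_incl. exists (pi2 z); split; [exists z; auto|].
      apply tcl_incl, meet_ler.
  - intros x y. apply le_antisym; apply O2_leP; intros p q H.
    + apply pi2P in H. split; apply pi2P; eapply le_trans; eauto using meet_lel, meet_ler.
    + destruct H as [H1%pi2P H2%pi2P]. apply pi2P, le_meet; auto.
  - apply le_antisym; [apply le_top|]. apply O2_leP; intros p q _. apply tcl_incl, le_top.
Qed.

Lemma pi1_pi2_composable : composable G pi1 pi2.
Proof.
  intros c. apply le_antisym; apply O2_leP; intros p q H;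
    apply (H _ (tcl_tsat G _)); intros p0 q0 H0.
  - rewrite <- (ract_id G p0 c H0). apply (tsat_balanced G _ (tcl_tsat G _)).
    apply tcl_incl, meet_lel.
  - rewrite <- (lact_id G c q0 H0). apply (tsat_balanced G _ (tcl_tsat G _)).
    apply tcl_incl, meet_lel.
Qed.

Definition pi2i (y : Q) : O2 G := pi2 (i y).

Lemma pi2i_hom : frame_hom pi2i.
Proof. exact (frame_hom_comp i pi2 (i_hom G HG) pi2_hom). Qed.
Lemma pi2_pi2i_composable : composable G pi2 pi2i.
Proof. intros c; unfold pi2i; rewrite (i_d G HG); reflexivity. Qed.

Definition m_O2 (a : Q) : O2 G := pairing pi1 pi2 (m a).

(* The map (g, h) |-> (g h) h^-1 is the first projection. *)
Lemma pairing_m_O2_pi2i a : pairing m_O2 pi2i (m a) = pi1 a.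
Proof.
  unfold m_O2.
  rewrite (pairing_assoc G HG); auto using pi1_hom, pi2_hom, pi2i_hom, pi1_pi2_composable,
    pi2_pi2i_composable.
  rewrite (pairing_ext pi1 (fun q => pairing pi2 pi2i (m q)) pi1 (fun q => pi1 (r (u q))));
    [apply (pairing_unit_r G HG), pi1_hom | reflexivity |].
  intros q. unfold pi2i. rewrite (pairing_inv_r G HG pi2 q pi2_hom).
  symmetry; apply pi1_pi2_composable.
Qed.

Lemma m_O2_le a x y : proj1_sig (m_O2 a) x y -> m a x y.
Proof.
  pose proof (m_tsat G HG a) as HS.
  revert x y. apply (proj1 (O2_leP G (m_O2 a) (exist _ (m a) HS))).
  apply pairing_lub. intros x y Sxy. apply O2_leP. intros p q [H1 H2]. simpl.
  apply (tsat_restrict_l _ HS). apply pi1P in H1.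
  set (p' := fmeet (r (dl q)) p) in *.
  assert (H2' : proj1_sig (pi2 y) p' q).
  { eapply (tsat_down G _ (proj2_sig (pi2 y))); eauto using meet_ler, le_refl. }
  apply pi2P in H2'. apply (tsat_restrict_r _ HS).
  eapply (tsat_down G _ HS); eauto.
Qed.

Lemma m_mono a b x y : fle a b -> m a x y -> m b x y.
Proof. intros Hab H. rewrite <- (meet_idl a b Hab) in H. apply (m_meet G HG) in H. apply H. Qed.

Lemma m_O2_mono a b : fle a b -> fle (m_O2 a) (m_O2 b).
Proof. intros; apply pairing_mono; intros; eapply m_mono; eauto. Qed.

Lemma m_O2_meet a b : fle (fmeet (m_O2 a) (m_O2 b)) (m_O2 (fmeet a b)).
Proof.
  apply sup_meet_le. intros z [x [y [Hxy ->]]].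
  apply meet_sup_le. intros z [x' [y' [Hxy' ->]]].
  eapply le_trans; [| apply (pairing_ub pi1 pi2 _ (fmeet x x') (fmeet y y'))].
  - rewrite (frame_hom_meet _ pi1_hom), (frame_hom_meet _ pi2_hom).
    repeat apply le_meet; eauto 6 using le_trans, meet_lel, meet_ler.
  - apply (m_meet G HG). split.
    + eapply (tsat_down G _ (m_tsat G HG a)); eauto using meet_lel.
    + eapply (tsat_down G _ (m_tsat G HG b)); eauto using meet_ler.
Qed.

Lemma pi2_r_le_m_O2 b : fle (pi2 (r b)) (m_O2 (r b)).
Proof.
  eapply le_trans; [| apply (pairing_ub pi1 pi2 _ (ftop Q) (r b))].
  - rewrite (frame_hom_top _ pi1_hom), meet_topl. apply le_refl.
  - apply (m_r G HG), tcl_incl, le_refl.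
Qed.

(* m_!(x (x) y): k lies in x y iff k = (k t) t^-1 with k t in x and t^-1 in y. *)
Definition mul (x y : Q) : Q :=
  fsup (fun z => exists p q, m x p q /\ z = fmeet p (r (dl (fmeet q (i y))))).

Lemma mul_le_of_m a x y : m a x y -> fle (mul x y) a.
Proof.
  intros Hxy. apply sup_lub. intros z [p [q [Hpq ->]]].
  set (v := fmeet q (i y)).
  assert (Hpv : proj1_sig (pi1 a) p v).
  { rewrite <- pairing_m_O2_pi2i.
    apply (proj1 (O2_leP G _ _) (pairing_ub m_O2 pi2i (m a) x y Hxy)). split.
    - apply (proj1 (O2_leP G _ _) (pairing_ub pi1 pi2 (m x) p q Hpq)).
      split; apply tcl_incl; [apply le_refl | apply meet_lel].
    - apply tcl_incl, meet_ler. }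
  apply pi1P in Hpv. rewrite meetC; exact Hpv.
Qed.

Lemma m_of_mul_le a x y : fle (mul x y) a -> m a x y.
Proof.
  intros Ha. apply m_O2_le.
  enough (H : fle (fmeet (pi1 x) (pi2 y)) (m_O2 a)).
  { apply (proj1 (O2_leP G _ _) H). split; apply tcl_incl, le_refl. }
  rewrite <- (pairing_m_O2_pi2i x). apply sup_meet_le.
  intros z [p [q [Hpq ->]]].
  set (w := fmeet (i q) y).
  eapply le_trans; [| eapply le_trans; [apply (m_O2_meet p (r (dl (i w))))|]].
  - rewrite meetA. apply meet_mono; [apply le_refl|].
    unfold pi2i. rewrite <- (frame_hom_meet _ pi2_hom).
    eapply le_trans; [| apply pi2_r_le_m_O2]. apply (frame_hom_mono _ pi2_hom), le_r_dl_i.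
  - apply m_O2_mono. eapply le_trans; [| exact Ha]. apply sup_ub.
    exists p, q; split; auto. unfold w.
    rewrite (frame_hom_meet i (i_hom G HG)), (i_involutive G HG). reflexivity.
Qed.

Lemma finf_m_le a x y : fle (finf Q (fun z => m z x y)) a <-> m a x y.
Proof.
  split.
  - intros H. apply m_of_mul_le. eapply le_trans; [|exact H].
    apply finf_glb. intros; apply mul_le_of_m; auto.
  - intros H; exact (finf_lb (fun z => m z x y) a H).
Qed.

End OpenGroupoid.

Lemma GG_OG_iso (G : LGData) : open_localic_groupoid G -> lg_iso (GG (OG G)) G.
Proof.
  intros [HG [dl [dl_adj dl_frob]]].
  exists (fun a => a), (fun x => x).
  split; [exact frame_iso_id|]. split; [exact frame_iso_id|].
  split; [|split; [|split; [|split]]]; simpl.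
  - intros a. apply meet_topr.
  - intros a. rewrite meet_topr. apply finf_min.
    + rewrite (i_r G HG). apply le_refl.
    + intros z Hz%(i_le_iff G HG). rewrite (i_d G HG) in Hz. exact Hz.
  - reflexivity.
  - intros x. apply finf_min; [apply (i_le_iff G HG), le_refl|].
    intros z Hz%(i_le_iff G HG); exact Hz.
  - intros a x y. apply (finf_m_le G HG dl dl_adj dl_frob).
Qed.

Section GroupoidQuantale.
Variable Q : GQData.
Hypothesis HQ : groupoid_quantale Q.
Local Notation la := (q_lact Q).
Local Notation ra := (q_ract Q).
Local Notation inv := (q_inv Q).
Local Notation supp := (q_supp Q).
Local Notation top := (ftop (qQ Q)).

Ltac quantale_axiom := let H := fresh in
  pose proof HQ as H;
  unfold groupoid_quantale, is_equivariant_support, is_support, based_quantal_frame,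
    is_involutive, is_AA_quantale, is_bimodule in H;
  cbv zeta in H; decompose [and] H; assumption.

Lemma lact_top_meet a x : fmeet (la a top) x = la a x.
Proof.
  assert (E : forall a x y, fmeet (la a x) y = la a (fmeet x y)) by quantale_axiom.
  rewrite E, meet_topl; reflexivity.
Qed.

Lemma inv_involutive x : inv (inv x) = x. Proof. revert x; quantale_axiom. Qed.

Lemma inv_mono x y : fle x y -> fle (inv x) (inv y).
Proof. apply sup_preserving_mono; quantale_axiom. Qed.

Lemma inv_le_iff x z : fle x (inv z) <-> fle (inv x) z.
Proof.
  split; intros H; [rewrite <- (inv_involutive z) | rewrite <- (inv_involutive x)];
    apply inv_mono, H.
Qed.

Lemma inv_lact_top a : inv (la a top) = ra top a.
Proof.
  assert (inv_top : inv top = top).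
  { apply le_antisym; [apply le_top|]. apply inv_le_iff, le_top. }
  assert (E : forall a b x, inv (la a (ra x b)) = la b (ra (inv x) a)) by quantale_axiom.
  assert (Hla : forall m, la (ftop _) m = m) by quantale_axiom.
  assert (Hra : forall m, ra m (ftop _) = m) by quantale_axiom.
  rewrite <- (Hra top) at 1. rewrite E, inv_top, Hla. reflexivity.
Qed.

Lemma ract_top_meet a x : fmeet (ra top a) x = ra x a.
Proof.
  assert (E : forall a x y, fmeet (ra x a) y = ra (fmeet x y) a) by quantale_axiom.
  rewrite E, meet_topl; reflexivity.
Qed.

Lemma supp_least a x : fle x (la a top) <-> fle (supp x) a.
Proof.
  assert (supp_mono : forall x y, fle x y -> fle (supp x) (supp y))
    by (apply sup_preserving_mono; quantale_axiom).
  assert (supp_lact : forall a x, supp (la a x) = fmeet a (supp x)) by quantale_axiom.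
  assert (lact_supp : forall x, la (supp x) x = x) by quantale_axiom.
  assert (lact_meet : forall a b x, la (fmeet a b) x = la a (la b x)) by quantale_axiom.
  assert (lact_mono : forall a, sup_preserving (la a)) by quantale_axiom.
  split; intros H.
  - eapply le_trans; [apply supp_mono, H|]. rewrite supp_lact. apply meet_lel.
  - rewrite <- (lact_supp x), <- (meet_idr _ _ H), lact_meet, lact_supp.
    apply (sup_preserving_mono _ (lact_mono a)), le_top.
Qed.

End GroupoidQuantale.

Lemma OG_GG_iso (Q : GQData) : groupoid_quantale Q -> gq_iso (OG (GG Q)) Q.
Proof.
  intros HQ. exists (fun a => a), (fun x => x).
  split; [exact frame_iso_id|]. split; [exact frame_iso_id|].
  split; [|split; [|split; [|split; [|split]]]]; simpl.
  - intros a x. apply (lact_top_meet Q HQ).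
  - intros x a. rewrite (inv_lact_top Q HQ). apply (ract_top_meet Q HQ).
  - intros x y. apply finf_min; [apply le_refl | auto].
  - intros x. apply finf_min; [apply (inv_le_iff Q HQ), le_refl|].
    intros z Hz%(inv_le_iff Q HQ); exact Hz.
  - intros x. apply finf_min; [apply (supp_least Q HQ), le_refl|].
    intros a Ha%(supp_least Q HQ); exact Ha.
  - reflexivity.
Qed.

Theorem theorem5p14 :
  (forall G : LGData, open_localic_groupoid G -> lg_iso (GG (OG G)) G) /\
  (forall Q : GQData, groupoid_quantale Q -> gq_iso (OG (GG Q)) Q).
Proof. split; [exact GG_OG_iso | exact OG_GG_iso]. Qed.
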